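(* Let $k\geq 2$ and $\Lambda_{\rm cr}(k)=\frac{k^k}{(k-1)^{k+1}}$. Consider the HC model with countable set of spin values $\mathbb Z$ on the Cayley tree $\Gamma^k$, associated with the graph $G$ on $\mathbb Z$ in which every vertex is adjacent to $0$ and no two vertices of $\mathbb Z_0=\mathbb Z\setminus\{0\}$ are adjacent, with activities $\lambda_j>0$. Then: (1) If the series $\sum_{j\in\mathbb Z_0}\lambda_j$ converges, with sum $\Lambda$, then for $0<\Lambda\leq\Lambda_{\rm cr}$ there exists a unique $G_k^{(2)}$-periodic Gibbs measure $\mu_0$, and it is translation-invariant; and for $\Lambda>\Lambda_{\rm cr}$ there are exactly three $G_k^{(2)}$-periodic Gibbs measures $\mu_0,\mu_1,\mu_2$, where $\mu_0$ is translation-invariant and $\mu_1,\mu_2$ are not translation-invariant. (2) If the series $\sum_{j\in\mathbb Z_0}\lambda_j$ diverges, there is no $G_k^{(2)}$-periodic Gibbs measure.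
   Context: The Cayley tree $\Gamma^k$ of order $k$ is the infinite tree in which every vertex has exactly $k+1$ neighbours; $V$ is its vertex set, identified with the group $G_k$, the free product of $k+1$ cyclic groups of order two; $G_k^{(2)}$ is the subgroup of words of even length. Fix a root $x^0$ (the identity); $|x|$ is the distance from $x^0$ and $S(x)$ the set of direct successors of $x$. A configuration $\sigma:V\to\mathbb Z$ is admissible if $\sigma(x)\sigma(y)=0$ for all nearest neighbours $x,y$. The HC Hamiltonian is $H(\sigma)=J\sum_{x\in V}\ln\lambda_{\sigma(x)}$ for admissible $\sigma$ and $+\infty$ otherwise. Gibbs measures of this model correspond one-to-one to normalisable boundary laws, which (normalised at spin $0$) are families $z_x=(z_{i,x})_{i\in\mathbb Z_0}$ of positive numbers satisfying $z_{i,x}=\lambda_i\prod_{y\in S(x)}\bigl(1+\sum_{j\in\mathbb Z_0}z_{j,y}\bigr)^{-1}$, $i\in\mathbb Z_0$. A measure is $G_k^{(2)}$-periodic if it corresponds to a solution with $z_x=z$ for $|x|$ even and $z_x=\tilde z$ for $|x|$ odd, i.e. to positive sequences $z,\tilde z$ indexed by $\mathbb Z_0$ satisfying $$z_i=\lambda_i\Bigl(1+\sum_{j\in\mathbb Z_0}\tilde z_j\Bigr)^{-k},\qquad \tilde z_i=\lambda_i\Bigl(1+\sum_{j\in\mathbb Z_0}z_j\Bigr)^{-k},\qquad i\in\mathbb Z_0,$$ and it is normalisable if $\sum_i z_i^{(k+1)/k}<\infty$ and $\sum_i\tilde z_i^{(k+1)/k}<\infty$. Translation-invariant measures correspond to solutions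 with $z=\tilde z$. *)

From Stdlib Require Import Reals ZArith Lra.
From Coquelicot Require Import Coquelicot.
Open Scope R_scope.

(* Sum over Z_0 = Z \ {0} of a family f : Z -> R (the value f 0 is ignored).
   For nonnegative families, this symmetric enumeration gives the
   (unconditional) sum. *)
Definition Z0_term (f : Z -> R) (n : nat) : R :=
  f (Z.of_nat (S n)) + f (- Z.of_nat (S n))%Z.

Definition has_sum_Z0 (f : Z -> R) (s : R) : Prop := is_series (Z0_term f) s.
Definition summable_Z0 (f : Z -> R) : Prop := ex_series (Z0_term f).

Definition Lambda_cr (k : nat) : R := (INR k) ^ k / (INR k - 1) ^ (S k).

(* A G_k^(2)-periodic normalisable boundary law (z, zt), sequences indexed by
   Z_0 (values at 0 irrelevant):
     z_i  = lambda_i (1 + sum_{j in Z_0} zt_j)^(-k),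
     zt_i = lambda_i (1 + sum_{j in Z_0} z_j)^(-k),
   z_i, zt_i > 0, and sum z_i^((k+1)/k), sum zt_i^((k+1)/k) finite.
   By the one-to-one correspondence, these are the G_k^(2)-periodic Gibbs
   measures of the HC model. *)
Definition periodic_bl (k : nat) (lam : Z -> R) (z zt : Z -> R) : Prop :=
  (forall i, i <> 0%Z -> 0 < z i /\ 0 < zt i) /\
  exists s st : R,
    has_sum_Z0 z s /\ has_sum_Z0 zt st /\
    (forall i, i <> 0%Z -> z i = lam i / (1 + st) ^ k) /\
    (forall i, i <> 0%Z -> zt i = lam i / (1 + s) ^ k) /\
    summable_Z0 (fun i => Rpower (z i) (INR (S k) / INR k)) /\
    summable_Z0 (fun i => Rpower (zt i) (INR (S k) / INR k)).

Definition eqZ0 (f g : Z -> R) : Prop := forall i, i <> 0%Z -> f i = g i.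

(* Two boundary laws give the same measure *)
Definition same_bl (z1 zt1 z2 zt2 : Z -> R) : Prop := eqZ0 z1 z2 /\ eqZ0 zt1 zt2.

Definition transl_inv (z zt : Z -> R) : Prop := eqZ0 z zt.

From Stdlib Require Import Reals ZArith Lra Lia.
From Coquelicot Require Import Coquelicot.
Open Scope R_scope.

(* Summing the boundary-law equations over Z_0 shows that the sums x = sum z_i and y = sum zt_i
   solve x = L / (1 + y)^k, y = L / (1 + x)^k, where L = sum lambda_i; conversely every positive
   solution (x, y) gives back the boundary law z_i = lambda_i / (1 + y)^k, zt_i = lambda_i / (1 + x)^k,
   which is normalisable because z_i <= x.  So the periodic Gibbs measures are the positive
   solutions of this system, the translation-invariant one being its unique diagonal solution.
   A solution with y < x is determined by r = (1 + x) / (1 + y), and r = e^(2t) gives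
     x = e^(kt) sinh t / sinh((k-1)t),  y = e^(-kt) sinh t / sinh((k-1)t),
     L = sinh t sinh(kt)^k / sinh((k-1)t)^(k+1).
   This L(t) increases strictly on t > 0 from its limit Lambda_cr at 0 to +oo, so off-diagonal
   solutions exist iff L > Lambda_cr, and then there are exactly two, (x, y) and (y, x).
   If sum lambda_i diverges there is no boundary law at all, since lambda_i = z_i (1 + y)^k. *)

Lemma MVT_is_derive (f f' : R -> R) (a b : R) : a < b ->
  (forall x, a <= x <= b -> is_derive f x (f' x)) ->
  exists c, a < c < b /\ f b - f a = f' c * (b - a).
Proof.
  intros Hab Hf.
  destruct (MVT_cor2 f f' a b Hab) as [c [E Hc]].
  - intros x Hx. apply is_derive_Reals, Hf, Hx.
  - exists c. split; assumption.
Qed.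

Lemma le_of_is_derive_nonneg (f f' : R -> R) (a b : R) : a <= b ->
  (forall x, a <= x <= b -> is_derive f x (f' x)) ->
  (forall x, a <= x <= b -> 0 <= f' x) -> f a <= f b.
Proof.
  intros Hab Hf Hf'. destruct (Req_dec a b) as [<-|Hne]; [lra|].
  destruct (MVT_is_derive f f' a b) as [c [Hc E]]; [lra|assumption|].
  assert (0 <= f' c * (b - a)) by (apply Rmult_le_pos; [apply Hf'|]; lra).
  lra.
Qed.

Lemma lt_of_is_derive_pos (f f' : R -> R) (a b : R) : a < b ->
  (forall x, a <= x <= b -> is_derive f x (f' x)) ->
  (forall x, a < x < b -> 0 < f' x) -> f a < f b.
Proof.
  intros Hab Hf Hf'.
  destruct (MVT_is_derive f f' a b) as [c [Hc E]]; [assumption|assumption|].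
  assert (0 < f' c * (b - a)) by (apply Rmult_lt_0_compat; [apply Hf'|]; lra).
  lra.
Qed.

Lemma continuity_pt_near_right (f : R -> R) (a t eps : R) :
  continuity_pt f a -> 0 < t -> 0 < eps ->
  exists s, a < s < a + t /\ Rabs (f s - f a) < eps.
Proof.
  intros Hf Ht Heps. destruct (Hf eps Heps) as [d [Hd Hclose]].
  set (s := a + Rmin (d / 2) (t / 2)).
  assert (Hmin : 0 < Rmin (d / 2) (t / 2)) by (apply Rmin_glb_lt; lra).
  assert (Hd2 := Rmin_l (d / 2) (t / 2)). assert (Ht2 := Rmin_r (d / 2) (t / 2)).
  exists s. split; [unfold s; lra|].
  apply Hclose. split; [split; [exact I | unfold s; lra]|].
  simpl. unfold R_dist, s. rewrite Rabs_pos_eq; lra.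
Qed.

(** * Hyperbolic functions *)

Lemma sinh_add a b : sinh (a + b) = sinh a * cosh b + cosh a * sinh b.
Proof.
  unfold sinh, cosh. rewrite Ropp_plus_distr, !exp_plus, !exp_Ropp.
  field; split; apply exp_neq_0.
Qed.

Lemma sinh_sub a b : sinh (a - b) = sinh a * cosh b - cosh a * sinh b.
Proof.
  unfold sinh, cosh, Rminus. rewrite Ropp_plus_distr, Ropp_involutive, !exp_plus, !exp_Ropp.
  field; split; apply exp_neq_0.
Qed.

Lemma cosh_gt_1 x : x <> 0 -> 1 < cosh x.
Proof.
  intro Hx. unfold cosh. rewrite exp_Ropp. assert (Hw := exp_pos x).
  assert (exp x <> 1) by (rewrite <- exp_0; intro E; apply Hx, exp_inv, E).
  assert (0 < (exp x - 1) ^ 2 / exp x) by (apply Rdiv_lt_0_compat; [apply pow2_gt_0 | ]; lra).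
  replace ((exp x + / exp x) / 2) with (1 + (exp x - 1) ^ 2 / exp x / 2) by (field; lra).
  lra.
Qed.

Lemma cosh_ge_1 x : 1 <= cosh x.
Proof.
  destruct (Req_dec x 0) as [-> | Hx]; [rewrite cosh_0; lra |].
  apply Rlt_le, cosh_gt_1, Hx.
Qed.

Lemma sinh_ge_self x : 0 <= x -> x <= sinh x.
Proof.
  intro Hx.
  enough (sinh 0 - 0 <= sinh x - x) by (rewrite sinh_0 in *; lra).
  apply (le_of_is_derive_nonneg (fun y => sinh y - y) (fun y => cosh y - 1)); [lra | |].
  - intros y _. unfold sinh, cosh. auto_derive; [easy | field].
  - intros y _. generalize (cosh_ge_1 y). lra.
Qed.

Lemma sinh_pos x : 0 < x -> 0 < sinh x.
Proof. intro Hx. generalize (sinh_ge_self x). lra. Qed.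

Lemma sinh_nonneg x : 0 <= x -> 0 <= sinh x.
Proof. intro Hx. generalize (sinh_ge_self x Hx). lra. Qed.

Lemma sinh_le_mul_cosh x : 0 <= x -> sinh x <= x * cosh x.
Proof.
  intro Hx.
  enough (0 * cosh 0 - sinh 0 <= x * cosh x - sinh x) by (rewrite sinh_0 in *; lra).
  apply (le_of_is_derive_nonneg (fun y => y * cosh y - sinh y) (fun y => y * sinh y)); [lra | |].
  - intros y _. unfold sinh, cosh. auto_derive; [easy | field].
  - intros y Hy. apply Rmult_le_pos; [|apply sinh_nonneg]; lra.
Qed.

Lemma sinh_div_bounds x : 0 < x -> 1 <= sinh x / x <= cosh x.
Proof.
  intro Hx. split.
  - apply (Rmult_le_reg_r x); [exact Hx|]. unfold Rdiv.
    rewrite Rmult_assoc, Rinv_l, Rmult_1_r, Rmult_1_l by lra. apply sinh_ge_self. lra.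
  - apply (Rmult_le_reg_r x); [exact Hx|]. unfold Rdiv.
    rewrite Rmult_assoc, Rinv_l, Rmult_1_r, Rmult_comm by lra. apply sinh_le_mul_cosh. lra.
Qed.

Lemma sinh_mul_nat_ge n t : 0 <= t -> INR n * sinh t <= sinh (INR n * t).
Proof.
  intro Ht. induction n as [|n IH].
  - rewrite Rmult_0_l, Rmult_0_l, sinh_0. lra.
  - rewrite S_INR, !Rmult_plus_distr_r, !Rmult_1_l, sinh_add.
    assert (Hnt : 0 <= INR n * t) by (apply Rmult_le_pos; [apply pos_INR | lra]).
    generalize (sinh_nonneg _ Hnt) (sinh_nonneg _ Ht) (cosh_ge_1 t) (cosh_ge_1 (INR n * t)).
    nra.
Qed.

Lemma exp_INR_mul n x : exp (INR n * x) = exp x ^ n.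
Proof.
  rewrite <- Rpower_pow by apply exp_pos. unfold Rpower. rewrite ln_exp. reflexivity.
Qed.

Lemma exp_mul_sinh_add_sub u t : exp t * sinh (u + t) - exp (u + t) * sinh t = sinh u.
Proof.
  unfold sinh. rewrite Ropp_plus_distr, !exp_plus, !exp_Ropp.
  field; split; apply exp_neq_0.
Qed.

Lemma sinh_add_div_exp_sub u t : sinh (u + t) / exp t - sinh t / exp (u + t) = sinh u.
Proof.
  unfold sinh. rewrite Ropp_plus_distr, !exp_plus, !exp_Ropp.
  field; split; apply exp_neq_0.
Qed.

Lemma cosh_div_sinh_sub a b : sinh a <> 0 -> sinh b <> 0 ->
  cosh a / sinh a - cosh b / sinh b = sinh (b - a) / (sinh a * sinh b).
Proof. intros Ha Hb. rewrite sinh_sub. field. split; assumption. Qed.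

(** * The system satisfied by the sums *)

Definition sum_system (k : nat) (L x y : R) : Prop :=
  0 < x /\ 0 < y /\ x = L / (1 + y) ^ k /\ y = L / (1 + x) ^ k.

Lemma sum_system_swap k L x y : sum_system k L x y -> sum_system k L y x.
Proof. intros (Hx & Hy & Ex & Ey). repeat split; assumption. Qed.

Lemma sum_system_mul k L x y : sum_system k L x y ->
  x * (1 + y) ^ k = L /\ y * (1 + x) ^ k = L.
Proof.
  intros (Hx & Hy & Ex & Ey).
  assert (0 < (1 + x) ^ k) by (apply pow_lt; lra).
  assert (0 < (1 + y) ^ k) by (apply pow_lt; lra).
  split; [rewrite Ex | rewrite Ey]; field; lra.
Qed.

Lemma sum_system_of_mul k L x y : 0 < x -> 0 < y ->
  x * (1 + y) ^ k = L -> y * (1 + x) ^ k = L -> sum_system k L x y.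
Proof.
  intros Hx Hy Ex Ey.
  assert (0 < (1 + x) ^ k) by (apply pow_lt; lra).
  assert (0 < (1 + y) ^ k) by (apply pow_lt; lra).
  repeat split; try assumption; [rewrite <- Ex | rewrite <- Ey]; field; lra.
Qed.

Lemma sum_system_diag_exists k L : 0 < L -> exists x, sum_system k L x x.
Proof.
  intro HL.
  destruct (IVT (fun x => x * (1 + x) ^ k - L) 0 (L + 1)) as [x [Hx Ex]].
  - intro a. apply derivable_continuous_pt, ex_derive_Reals_0. auto_derive. easy.
  - lra.
  - simpl. lra.
  - assert (1 <= (1 + (L + 1)) ^ k) by (apply pow_R1_Rle; lra). simpl. nra.
  - assert (Hx0 : x <> 0) by (intros ->; rewrite Rmult_0_l in Ex; lra).
    exists x. apply sum_system_of_mul; lra.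
Qed.

Lemma sum_system_diag_unique k L x x' :
  sum_system k L x x -> sum_system k L x' x' -> x = x'.
Proof.
  intros Hs Hs'.
  destruct (sum_system_mul _ _ _ _ Hs) as [E _], (sum_system_mul _ _ _ _ Hs') as [E' _].
  destruct Hs as [Hx _], Hs' as [Hx' _].
  destruct (Rtotal_order x x') as [Hlt | [Heq | Hlt]]; [exfalso | assumption | exfalso].
  - assert ((1 + x) ^ k <= (1 + x') ^ k) by (apply pow_incr; lra).
    assert (0 < (1 + x) ^ k) by (apply pow_lt; lra). nra.
  - assert ((1 + x') ^ k <= (1 + x) ^ k) by (apply pow_incr; lra).
    assert (0 < (1 + x') ^ k) by (apply pow_lt; lra). nra.
Qed.

Lemma sum_system_ratio k L x y r : sum_system k L x y -> 1 + x = r * (1 + y) ->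
  x = y * r ^ k /\ y * (r ^ k - r) = r - 1.
Proof.
  intros Hs Hr. destruct (sum_system_mul _ _ _ _ Hs) as [Ex Ey].
  destruct Hs as (Hx & Hy & _).
  assert (0 < (1 + y) ^ k) by (apply pow_lt; lra).
  assert (Exr : x = y * r ^ k).
  { apply (Rmult_eq_reg_r ((1 + y) ^ k)); [|lra].
    rewrite Ex, <- Ey, Hr, Rpow_mult_distr. ring. }
  split; [assumption | nra].
Qed.

(** * Parametrization of the asymmetric solutions *)

Section Parametrization.

Variable k : nat.
Hypothesis k_ge2 : (2 <= k)%nat.

Definition param_L (t : R) : R :=
  sinh t * sinh (INR k * t) ^ k / sinh ((INR k - 1) * t) ^ S k.
Definition param_x (t : R) : R := exp (INR k * t) * sinh t / sinh ((INR k - 1) * t).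
Definition param_y (t : R) : R := sinh t / (exp (INR k * t) * sinh ((INR k - 1) * t)).

Lemma INR_k_ge2 : 2 <= INR k.
Proof. apply le_INR in k_ge2. simpl in k_ge2. lra. Qed.

Lemma sinh_param_pos t : 0 < t ->
  0 < sinh t /\ 0 < sinh (INR k * t) /\ 0 < sinh ((INR k - 1) * t).
Proof.
  intro Ht. generalize INR_k_ge2. intro HK.
  split; [|split]; apply sinh_pos; nra.
Qed.

Lemma param_x_pos t : 0 < t -> 0 < param_x t.
Proof.
  intro Ht. destruct (sinh_param_pos t Ht) as (P1 & _ & P3).
  unfold param_x. assert (He := exp_pos (INR k * t)).
  apply Rdiv_lt_0_compat; [apply Rmult_lt_0_compat|]; assumption.
Qed.

Lemma param_y_lt_x t : 0 < t -> param_y t < param_x t.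
Proof.
  intro Ht. destruct (sinh_param_pos t Ht) as (_ & _ & P3).
  assert (E : 1 < exp (INR k * t)).
  { rewrite <- exp_0. apply exp_increasing. generalize INR_k_ge2. nra. }
  assert (Ey : param_y t = param_x t / (exp (INR k * t) * exp (INR k * t))).
  { unfold param_x, param_y. field. lra. }
  assert (/ (exp (INR k * t) * exp (INR k * t)) < 1)
    by (rewrite <- Rinv_1; apply Rinv_lt_contravar; nra).
  rewrite Ey. generalize (param_x_pos t Ht). unfold Rdiv. nra.
Qed.

Lemma one_add_param_x t : 0 < t ->
  1 + param_x t = exp t * sinh (INR k * t) / sinh ((INR k - 1) * t).
Proof.
  intro Ht. destruct (sinh_param_pos t Ht) as (_ & _ & Pu).
  set (u := (INR k - 1) * t) in *.
  unfold param_x. fold u. replace (INR k * t) with (u + t) by (unfold u; ring).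
  replace (exp t * sinh (u + t)) with (sinh u + exp (u + t) * sinh t)
    by (generalize (exp_mul_sinh_add_sub u t); lra).
  field. lra.
Qed.

Lemma one_add_param_y t : 0 < t ->
  1 + param_y t = sinh (INR k * t) / (exp t * sinh ((INR k - 1) * t)).
Proof.
  intro Ht. destruct (sinh_param_pos t Ht) as (_ & _ & Pu).
  set (u := (INR k - 1) * t) in *.
  unfold param_y. fold u. replace (INR k * t) with (u + t) by (unfold u; ring).
  replace (sinh (u + t) / (exp t * sinh u)) with ((sinh u + sinh t / exp (u + t)) / sinh u).
  - field; repeat split; (apply exp_neq_0 || lra).
  - replace (sinh u + sinh t / exp (u + t)) with (sinh (u + t) / exp t)
      by (generalize (sinh_add_div_exp_sub u t); lra).
    field; repeat split; (apply exp_neq_0 || lra).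
Qed.

Lemma param_ratio t : 0 < t -> 1 + param_x t = exp (2 * t) * (1 + param_y t).
Proof.
  intro Ht. destruct (sinh_param_pos t Ht) as (_ & _ & Pu).
  rewrite one_add_param_x, one_add_param_y by exact Ht.
  replace (2 * t) with (t + t) by ring. rewrite exp_plus.
  field. split; [lra | apply exp_neq_0].
Qed.

Lemma sum_system_param t : 0 < t -> sum_system k (param_L t) (param_x t) (param_y t).
Proof.
  intro Ht. destruct (sinh_param_pos t Ht) as (P1 & PK & Pu).
  assert (Ek : exp t ^ k = exp (INR k * t)) by (rewrite exp_INR_mul; reflexivity).
  assert (Hek := exp_pos (INR k * t)). assert (He := exp_pos t).
  apply sum_system_of_mul.
  - apply param_x_pos, Ht.
  - unfold param_y. apply Rdiv_lt_0_compat; [|apply Rmult_lt_0_compat]; assumption.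
  - rewrite one_add_param_y by exact Ht. unfold param_x, param_L, Rdiv.
    rewrite !Rpow_mult_distr, !pow_inv, Rpow_mult_distr, Ek, <- tech_pow_Rmult.
    field. repeat split; try apply pow_nonzero; lra.
  - rewrite one_add_param_x by exact Ht. unfold param_y, param_L, Rdiv.
    rewrite !Rpow_mult_distr, !pow_inv, Ek, <- tech_pow_Rmult.
    field. repeat split; try apply pow_nonzero; lra.
Qed.

(* The solution is determined by r = (1 + x) / (1 + y) (see [sum_system_ratio]), and the
   parametrized solution at t = ln r / 2 has the same ratio. *)
Lemma sum_system_asym_param L x y : sum_system k L x y -> y < x ->
  exists t, 0 < t /\ x = param_x t /\ y = param_y t /\ L = param_L t.
Proof.
  intros Hs Hyx. pose proof Hs as (_ & Hy & _).
  set (r := (1 + x) / (1 + y)).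
  assert (Hr : 1 + x = r * (1 + y)) by (unfold r; field; lra).
  assert (Hr1 : 1 < r) by (apply (Rmult_lt_reg_r (1 + y)); [lra|]; rewrite <- Hr; lra).
  set (t := ln r / 2).
  assert (Ht : 0 < t).
  { assert (Hln : ln 1 < ln r) by (apply ln_increasing; lra).
    rewrite ln_1 in Hln. unfold t. lra. }
  assert (Hrt : exp (2 * t) = r) by (unfold t; replace (2 * (ln r / 2)) with (ln r) by field; apply exp_ln; lra).
  pose proof (sum_system_param t Ht) as Hst.
  destruct (sum_system_ratio _ _ _ _ r Hs Hr) as [Ex Ey].
  destruct (sum_system_ratio _ _ _ _ r Hst) as [Ex' Ey'].
  { rewrite <- Hrt. apply param_ratio, Ht. }
  assert (Hd : r ^ k - r <> 0) by (intro E; rewrite E in Ey; lra).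
  assert (Eyy : y = param_y t) by (apply (Rmult_eq_reg_r (r ^ k - r)); [lra | assumption]).
  exists t. repeat split; [assumption | congruence | assumption |].
  destruct (sum_system_mul _ _ _ _ Hs) as [EL _], (sum_system_mul _ _ _ _ Hst) as [EL' _].
  rewrite <- EL, <- EL'. congruence.
Qed.

Definition log_param_L (t : R) : R :=
  ln (sinh t) + INR k * ln (sinh (INR k * t)) - INR (S k) * ln (sinh ((INR k - 1) * t)).

Definition dlog_param_L (t : R) : R :=
  cosh t / sinh t + INR k ^ 2 * (cosh (INR k * t) / sinh (INR k * t))
  - (INR k ^ 2 - 1) * (cosh ((INR k - 1) * t) / sinh ((INR k - 1) * t)).

Lemma param_L_exp_log t : 0 < t -> param_L t = exp (log_param_L t).
Proof.
  intro Ht. destruct (sinh_param_pos t Ht) as (P1 & PK & Pu).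
  unfold log_param_L, param_L, Rminus.
  rewrite !exp_plus, exp_Ropp, exp_ln by exact P1.
  rewrite <- !(Rpower_pow _ _ PK), <- !(Rpower_pow _ _ Pu). unfold Rpower.
  reflexivity.
Qed.

Lemma is_derive_log_param_L t : 0 < t -> is_derive log_param_L t (dlog_param_L t).
Proof.
  intro Ht. destruct (sinh_param_pos t Ht) as (P1 & PK & Pu).
  unfold log_param_L, dlog_param_L. rewrite S_INR. unfold sinh, cosh in *.
  auto_derive.
  - repeat split; lra.
  - field. lra.
Qed.

(* With u = (k-1)t, expand the coth differences with [cosh_div_sinh_sub]; then
   sinh (n t) >= n sinh t bounds dlog_param_L t below by 2 (cosh u - 1) / sinh u. *)
Lemma dlog_param_L_pos t : 0 < t -> 0 < dlog_param_L t.
Proof.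
  intro Ht. destruct (sinh_param_pos t Ht) as (P1 & PK & Pu).
  assert (HK := INR_k_ge2).
  set (K := INR k) in *. set (u := (K - 1) * t) in *.
  assert (Hu : 0 < u) by (unfold u; nra).
  assert (Hc : 1 < cosh u) by (apply cosh_gt_1; lra).
  assert (Sub : (K - 2) * sinh t <= sinh (u - t)).
  { assert (E2 : INR (k - 2) = K - 2) by (rewrite minus_INR by exact k_ge2; simpl; unfold K; ring).
    replace (u - t) with (INR (k - 2) * t) by (rewrite E2; unfold u; ring).
    rewrite <- E2. apply sinh_mul_nat_ge. lra. }
  assert (SK : K * sinh t <= sinh (K * t)) by (apply sinh_mul_nat_ge; lra).
  assert (Hu_t : sinh (K * t - u) = sinh t) by (unfold u; f_equal; ring).
  assert (E : dlog_param_L t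
              = sinh (u - t) / (sinh t * sinh u) - K ^ 2 * (sinh (K * t - u) / (sinh u * sinh (K * t)))
                + 2 * (cosh u / sinh u)).
  { rewrite <- !cosh_div_sinh_sub by lra. unfold dlog_param_L. fold K u. field. lra. }
  rewrite E, Hu_t.
  assert (IA : 0 <= sinh (u - t) / (sinh t * sinh u) - (K - 2) / sinh u).
  { replace (sinh (u - t) / (sinh t * sinh u) - (K - 2) / sinh u)
      with ((sinh (u - t) - (K - 2) * sinh t) / (sinh t * sinh u)) by (field; lra).
    apply Rdiv_le_0_compat; [lra | nra]. }
  assert (IB : 0 <= K / sinh u - K ^ 2 * (sinh t / (sinh u * sinh (K * t)))).
  { replace (K / sinh u - K ^ 2 * (sinh t / (sinh u * sinh (K * t))))
      with (K * (sinh (K * t) - K * sinh t) / (sinh u * sinh (K * t))) by (field; lra).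
    apply Rdiv_le_0_compat; nra. }
  assert (IC : 0 < 2 * (cosh u - 1) / sinh u) by (apply Rdiv_lt_0_compat; lra).
  assert (EC : (K - 2) / sinh u - K / sinh u + 2 * (cosh u / sinh u) = 2 * (cosh u - 1) / sinh u)
    by (field; lra).
  lra.
Qed.

Lemma param_L_lt t1 t2 : 0 < t1 -> t1 < t2 -> param_L t1 < param_L t2.
Proof.
  intros H1 H12. rewrite !param_L_exp_log by lra. apply exp_increasing.
  apply (lt_of_is_derive_pos log_param_L dlog_param_L); [exact H12 | |].
  - intros x Hx. apply is_derive_log_param_L. lra.
  - intros x Hx. apply dlog_param_L_pos. lra.
Qed.

Lemma param_L_inj t1 t2 : 0 < t1 -> 0 < t2 -> param_L t1 = param_L t2 -> t1 = t2.
Proof.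
  intros H1 H2 E. destruct (Rtotal_order t1 t2) as [Hlt | [Heq | Hlt]]; [| exact Heq |].
  - generalize (param_L_lt t1 t2 H1 Hlt). lra.
  - generalize (param_L_lt t2 t1 H2 Hlt). lra.
Qed.

Lemma param_L_gt_self t : 0 < t -> t < param_L t.
Proof.
  intro Ht. destruct (sinh_param_pos t Ht) as (P1 & _ & Pu).
  destruct (sum_system_param t Ht) as (_ & Hy & _).
  destruct (sum_system_mul _ _ _ _ (sum_system_param t Ht)) as [EL _].
  assert (Hpow : 1 <= (1 + param_y t) ^ k) by (apply pow_R1_Rle; lra).
  assert (Hsu : sinh ((INR k - 1) * t) < exp (INR k * t)).
  { assert (exp ((INR k - 1) * t) < exp (INR k * t)) by (apply exp_increasing; lra).
    generalize (exp_pos (- ((INR k - 1) * t))) (exp_pos ((INR k - 1) * t)). unfold sinh. lra. }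
  assert (Hxs : sinh t < param_x t).
  { unfold param_x. apply (Rmult_lt_reg_r (sinh ((INR k - 1) * t))); [exact Pu|].
    replace (exp (INR k * t) * sinh t / sinh ((INR k - 1) * t) * sinh ((INR k - 1) * t))
      with (exp (INR k * t) * sinh t) by (field; lra).
    nra. }
  generalize (sinh_ge_self t). nra.
Qed.

Lemma Lambda_cr_pos : 0 < Lambda_cr k.
Proof.
  assert (HK := INR_k_ge2).
  unfold Lambda_cr. apply Rdiv_lt_0_compat; apply pow_lt; lra.
Qed.

(* As sinh x / x -> 1 when x -> 0, this shows that param_L t -> Lambda_cr k as t -> 0. *)
Lemma param_L_factor t : 0 < t ->
  param_L t = Lambda_cr k * (sinh t / t) * (sinh (INR k * t) / (INR k * t)) ^ k
                / (sinh ((INR k - 1) * t) / ((INR k - 1) * t)) ^ S k.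
Proof.
  intro Ht. destruct (sinh_param_pos t Ht) as (_ & _ & Pu).
  assert (HK := INR_k_ge2).
  unfold param_L, Lambda_cr, Rdiv. rewrite !Rpow_mult_distr, !pow_inv, !Rpow_mult_distr.
  rewrite <- !tech_pow_Rmult.
  field. repeat split; try apply pow_nonzero; lra.
Qed.

Lemma param_L_lower t : 0 < t -> Lambda_cr k / cosh ((INR k - 1) * t) ^ S k <= param_L t.
Proof.
  intro Ht. assert (HK := INR_k_ge2). assert (Hcr := Lambda_cr_pos).
  rewrite param_L_factor by exact Ht.
  destruct (sinh_div_bounds t) as [A1 _]; [exact Ht|].
  destruct (sinh_div_bounds (INR k * t)) as [B1 _]; [nra|].
  destruct (sinh_div_bounds ((INR k - 1) * t)) as [C1 C2]; [nra|].
  set (a := sinh t / t) in *. set (b := sinh (INR k * t) / (INR k * t)) in *.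
  set (c := sinh ((INR k - 1) * t) / ((INR k - 1) * t)) in *.
  set (C := cosh ((INR k - 1) * t)) in *.
  assert (HB : 1 <= b ^ k) by (apply pow_R1_Rle; exact B1).
  assert (HC : / C ^ S k <= / c ^ S k).
  { apply Rinv_le_contravar; [apply pow_lt; lra | apply pow_incr; lra]. }
  assert (0 < / c ^ S k) by (apply Rinv_0_lt_compat, pow_lt; lra).
  unfold Rdiv.
  apply (Rle_trans _ (Lambda_cr k * / c ^ S k)); [apply Rmult_le_compat_l; lra|].
  assert (1 <= a * b ^ k) by nra.
  replace (Lambda_cr k * a * b ^ k * / c ^ S k) with (Lambda_cr k * / c ^ S k * (a * b ^ k)) by ring.
  assert (0 < Lambda_cr k * / c ^ S k) by nra. nra.
Qed.

Lemma param_L_upper t : 0 < t -> param_L t <= Lambda_cr k * cosh t * cosh (INR k * t) ^ k.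
Proof.
  intro Ht. assert (HK := INR_k_ge2). assert (Hcr := Lambda_cr_pos).
  rewrite param_L_factor by exact Ht.
  destruct (sinh_div_bounds t) as [A1 A2]; [exact Ht|].
  destruct (sinh_div_bounds (INR k * t)) as [B1 B2]; [nra|].
  destruct (sinh_div_bounds ((INR k - 1) * t)) as [C1 _]; [nra|].
  set (a := sinh t / t) in *. set (b := sinh (INR k * t) / (INR k * t)) in *.
  set (c := sinh ((INR k - 1) * t) / ((INR k - 1) * t)) in *.
  assert (HB : 1 <= b ^ k) by (apply pow_R1_Rle; exact B1).
  assert (HB' : b ^ k <= cosh (INR k * t) ^ k) by (apply pow_incr; lra).
  assert (HC : / c ^ S k <= 1).
  { rewrite <- Rinv_1. apply Rinv_le_contravar; [lra | apply pow_R1_Rle; exact C1]. }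
  assert (0 < / c ^ S k) by (apply Rinv_0_lt_compat, pow_lt; lra).
  assert (Habk : 0 < Lambda_cr k * a * b ^ k) by (apply Rmult_lt_0_compat; nra).
  unfold Rdiv.
  apply (Rle_trans _ (Lambda_cr k * a * b ^ k)); [nra|].
  rewrite !Rmult_assoc. apply Rmult_le_compat_l; [lra|]. apply Rmult_le_compat; lra.
Qed.

Lemma Lambda_cr_lt_param_L t : 0 < t -> Lambda_cr k < param_L t.
Proof.
  intro Ht.
  assert (Hhalf : param_L (t / 2) < param_L t) by (apply param_L_lt; lra).
  enough (Lambda_cr k <= param_L (t / 2)) by lra.
  apply Rnot_lt_le. intro Hlt.
  set (g := fun s => Lambda_cr k / cosh ((INR k - 1) * s) ^ S k).
  assert (Hg : continuity_pt g 0).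
  { apply derivable_continuous_pt, ex_derive_Reals_0. unfold g, cosh. auto_derive.
    rewrite Rmult_0_r, Ropp_0, exp_0, Rinv_r, pow1 by lra. lra. }
  assert (Hg0 : g 0 = Lambda_cr k) by (unfold g; rewrite Rmult_0_r, cosh_0, pow1; field).
  destruct (continuity_pt_near_right g 0 (t / 2) (Lambda_cr k - param_L (t / 2)))
    as [s [Hs Hgs]]; [exact Hg | lra | lra |].
  rewrite Hg0 in Hgs. apply Rabs_def2 in Hgs.
  assert (g s <= param_L s) by (apply param_L_lower; lra).
  assert (param_L s < param_L (t / 2)) by (apply param_L_lt; lra).
  lra.
Qed.

Lemma param_L_surj L : Lambda_cr k < L -> exists t, 0 < t /\ param_L t = L.
Proof.
  intro HL. assert (Hcr := Lambda_cr_pos).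
  set (h := fun s => Lambda_cr k * cosh s * cosh (INR k * s) ^ k).
  assert (Hh : continuity_pt h 0).
  { apply derivable_continuous_pt, ex_derive_Reals_0. unfold h, cosh. auto_derive. easy. }
  assert (Hh0 : h 0 = Lambda_cr k) by (unfold h; rewrite Rmult_0_r, cosh_0, pow1; ring).
  destruct (continuity_pt_near_right h 0 L (L - Lambda_cr k)) as [s [Hs Hhs]];
    [exact Hh | lra | lra |].
  rewrite Hh0 in Hhs. apply Rabs_def2 in Hhs.
  assert (Hlow : param_L s < L).
  { assert (param_L s <= h s) by (apply param_L_upper; lra). lra. }
  assert (Hhigh : L < param_L L) by (apply param_L_gt_self; lra).
  destruct (Ranalysis5.IVT_interv (fun t => log_param_L t - ln L) s L) as [t [Ht Et]].
  - intros a Ha. apply continuity_pt_minus; [| apply continuity_pt_const; intros ? ?; reflexivity].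
    apply derivable_continuous_pt, ex_derive_Reals_0.
    eexists. apply is_derive_log_param_L; lra.
  - lra.
  - rewrite (param_L_exp_log s) in Hlow by lra.
    rewrite <- (ln_exp (log_param_L s)).
    generalize (ln_increasing _ _ (exp_pos _) Hlow). lra.
  - rewrite (param_L_exp_log L) in Hhigh by lra.
    rewrite <- (ln_exp (log_param_L L)).
    assert (HL0 : 0 < L) by lra.
    generalize (ln_increasing _ _ HL0 Hhigh). lra.
  - exists t. split; [lra|].
    rewrite param_L_exp_log by lra.
    replace (log_param_L t) with (ln L) by lra. apply exp_ln. lra.
Qed.

Lemma sum_system_cases L x y : sum_system k L x y ->
  x = y \/ exists t, 0 < t /\ L = param_L t /\
    (x = param_x t /\ y = param_y t \/ x = param_y t /\ y = param_x t).
Proof.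
  intros Hs. destruct (Rtotal_order x y) as [Hlt | [Heq | Hlt]]; [right | left; exact Heq | right].
  - destruct (sum_system_asym_param L y x (sum_system_swap _ _ _ _ Hs) Hlt)
      as (t & Ht & Ey & Ex & EL).
    exists t. auto.
  - destruct (sum_system_asym_param L x y Hs Hlt) as (t & Ht & Ex & Ey & EL).
    exists t. auto.
Qed.

Lemma sum_system_subcritical L x y : L <= Lambda_cr k ->
  sum_system k L x y -> x = y.
Proof.
  intros HL Hs. destruct (sum_system_cases L x y Hs) as [E | (t & Ht & EL & _)];
    [exact E|].
  generalize (Lambda_cr_lt_param_L t Ht). lra.
Qed.

Lemma sum_system_supercritical t x y : 0 < t ->
  sum_system k (param_L t) x y ->
  x = y \/ (x = param_x t /\ y = param_y t) \/ (x = param_y t /\ y = param_x t).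
Proof.
  intros Ht Hs. destruct (sum_system_cases _ x y Hs) as [E | (t' & Ht' & EL & Hxy)];
    [left; exact E | right].
  apply param_L_inj in EL; [subst t'; exact Hxy | exact Ht | exact Ht'].
Qed.

End Parametrization.

Lemma is_series_term_le (a : nat -> R) l n : (forall m, 0 <= a m) -> is_series a l -> a n <= l.
Proof.
  intros Ha Hl. apply is_series_Reals in Hl.
  assert (Hgrow : Un_growing (sum_f_R0 a)) by (intro m; simpl; generalize (Ha (S m)); lra).
  apply (Rle_trans _ (sum_f_R0 a n)); [| exact (growing_ineq _ _ Hgrow Hl n)].
  destruct n as [|n]; simpl; [lra|].
  generalize (cond_pos_sum a n Ha). lra.
Qed.

Lemma Z0_term_ext (f g : Z -> R) n : eqZ0 f g -> Z0_term f n = Z0_term g n.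
Proof. intro E. unfold Z0_term. rewrite !E by lia. reflexivity. Qed.

Lemma Z0_term_pos (f : Z -> R) n : (forall i, i <> 0%Z -> 0 < f i) -> 0 < Z0_term f n.
Proof.
  intro Hf. unfold Z0_term.
  assert (0 < f (Z.of_nat (S n))) by (apply Hf; lia).
  assert (0 < f (- Z.of_nat (S n))%Z) by (apply Hf; lia).
  lra.
Qed.

Lemma has_sum_Z0_unique (f g : Z -> R) s s' : eqZ0 f g ->
  has_sum_Z0 f s -> has_sum_Z0 g s' -> s = s'.
Proof.
  intros E Hf Hg. apply is_series_unique in Hf. apply is_series_unique in Hg.
  rewrite <- Hf, <- Hg. apply Series_ext. intro n. apply Z0_term_ext, E.
Qed.

Lemma has_sum_Z0_mul_r (f : Z -> R) s c : has_sum_Z0 f s ->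
  has_sum_Z0 (fun i => f i * c) (s * c).
Proof.
  intro Hf. apply (is_series_ext (fun n => Z0_term f n * c)).
  - intro n. unfold Z0_term. simpl. ring.
  - apply is_series_scal_r, Hf.
Qed.

Lemma has_sum_Z0_le (f : Z -> R) s i : (forall j, j <> 0%Z -> 0 < f j) ->
  has_sum_Z0 f s -> i <> 0%Z -> f i <= s.
Proof.
  intros Hf Hs Hi.
  assert (Hn := is_series_term_le _ s (Z.to_nat (Z.abs i) - 1) (fun m => Rlt_le _ _ (Z0_term_pos f m Hf)) Hs).
  unfold Z0_term in Hn. replace (S (Z.to_nat (Z.abs i) - 1)) with (Z.to_nat (Z.abs i)) in Hn by lia.
  replace (Z.of_nat (Z.to_nat (Z.abs i))) with (Z.abs i) in Hn by lia.
  assert (0 < f (Z.abs i)) by (apply Hf; lia).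
  assert (0 < f (- Z.abs i)%Z) by (apply Hf; lia).
  destruct (Z.abs_eq_or_opp i) as [E | E]; rewrite E in *; [lra | rewrite Z.opp_involutive in *; lra].
Qed.

Lemma has_sum_Z0_pos (f : Z -> R) s : (forall i, i <> 0%Z -> 0 < f i) ->
  has_sum_Z0 f s -> 0 < s.
Proof.
  intros Hf Hs. apply (Rlt_le_trans _ (f 1%Z)); [apply Hf; lia |].
  apply (has_sum_Z0_le f); [exact Hf | exact Hs | lia].
Qed.

Lemma summable_Z0_Rpower (f : Z -> R) s p : 1 <= p -> (forall i, i <> 0%Z -> 0 < f i) ->
  has_sum_Z0 f s -> summable_Z0 (fun i => Rpower (f i) p).
Proof.
  intros Hp Hf Hs.
  assert (Hbound : forall i, i <> 0%Z -> 0 < Rpower (f i) p <= f i * Rpower s (p - 1)).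
  { intros i Hi. assert (Hfi := Hf i Hi). assert (Hfs := has_sum_Z0_le f s i Hf Hs Hi).
    split; [apply exp_pos |].
    replace p with (1 + (p - 1)) at 1 by ring.
    rewrite Rpower_plus, Rpower_1 by exact Hfi.
    apply Rmult_le_compat_l; [lra | apply Rle_Rpower_l; lra]. }
  apply (@ex_series_le R_AbsRing R_CompleteNormedModule _ (fun n => Z0_term f n * Rpower s (p - 1))).
  - intro n. change (norm ?x) with (Rabs x). unfold Z0_term.
    destruct (Hbound (Z.of_nat (S n))), (Hbound (- Z.of_nat (S n))%Z); try lia.
    rewrite Rabs_pos_eq; lra.
  - apply ex_series_scal_r. exists s. exact Hs.
Qed.

(** * Boundary laws *)

Definition bl_of (k : nat) (lam : Z -> R) (y : R) : Z -> R := fun i => lam i / (1 + y) ^ k.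

Lemma has_sum_bl_of k lam L x y : has_sum_Z0 lam L -> sum_system k L x y ->
  has_sum_Z0 (bl_of k lam y) x.
Proof. intros Hlam (_ & _ & Ex & _). rewrite Ex. apply has_sum_Z0_mul_r, Hlam. Qed.

Lemma bl_of_eqZ0_inj k lam L x y x' y' : has_sum_Z0 lam L ->
  sum_system k L x y -> sum_system k L x' y' -> eqZ0 (bl_of k lam y) (bl_of k lam y') -> x = x'.
Proof.
  intros Hlam Hs Hs' E.
  apply (has_sum_Z0_unique _ _ _ _ E); eapply has_sum_bl_of; eassumption.
Qed.

Lemma periodic_bl_of_sum_system k lam L x y : (1 <= k)%nat ->
  (forall i, i <> 0%Z -> 0 < lam i) -> has_sum_Z0 lam L -> sum_system k L x y ->
  periodic_bl k lam (bl_of k lam y) (bl_of k lam x).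
Proof.
  intros Hk Hlam HL Hs. pose proof Hs as (Hx & Hy & _).
  assert (Hpos : forall v, 0 < v -> forall i, i <> 0%Z -> 0 < bl_of k lam v i).
  { intros v Hv i Hi. apply Rdiv_lt_0_compat; [apply Hlam, Hi | apply pow_lt; lra]. }
  assert (Hp : 1 <= INR (S k) / INR k).
  { apply le_INR in Hk. rewrite S_INR. simpl in Hk.
    apply (Rmult_le_reg_r (INR k)); [lra|]. field_simplify; lra. }
  split; [intros i Hi; split; apply Hpos; assumption |].
  exists x, y. repeat split.
  - eapply has_sum_bl_of; eassumption.
  - eapply has_sum_bl_of; [eassumption | apply sum_system_swap; eassumption].
  - eapply summable_Z0_Rpower; [exact Hp | apply Hpos, Hy | eapply has_sum_bl_of; eassumption].
  - eapply summable_Z0_Rpower; [exact Hp | apply Hpos, Hx |].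
    eapply has_sum_bl_of; [eassumption | apply sum_system_swap; eassumption].
Qed.

Lemma sum_system_of_periodic_bl k lam L z zt : (forall i, i <> 0%Z -> 0 < lam i) ->
  has_sum_Z0 lam L -> periodic_bl k lam z zt ->
  exists x y, sum_system k L x y /\ same_bl z zt (bl_of k lam y) (bl_of k lam x).
Proof.
  intros Hlam HL (Hpos & x & y & Hz & Hzt & Ez & Ezt & _).
  assert (Hx : 0 < x) by (apply (has_sum_Z0_pos z); [intros; apply Hpos | ]; assumption).
  assert (Hy : 0 < y) by (apply (has_sum_Z0_pos zt); [intros; apply Hpos | ]; assumption).
  exists x, y. split; [| split; assumption].
  repeat split; try assumption.
  - apply (has_sum_Z0_unique z (bl_of k lam y)); [exact Ez | exact Hz | apply has_sum_Z0_mul_r, HL].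
  - apply (has_sum_Z0_unique zt (bl_of k lam x)); [exact Ezt | exact Hzt | apply has_sum_Z0_mul_r, HL].
Qed.

Lemma summable_of_periodic_bl k lam z zt : periodic_bl k lam z zt -> summable_Z0 lam.
Proof.
  intros (Hpos & x & y & Hz & Hzt & Ez & _).
  assert (Hy : 0 < y) by (apply (has_sum_Z0_pos zt); [intros; apply Hpos | ]; assumption).
  assert (Hyk : 0 < (1 + y) ^ k) by (apply pow_lt; lra).
  exists (x * (1 + y) ^ k).
  apply (is_series_ext (Z0_term (fun i => z i * (1 + y) ^ k))).
  - intro n. apply Z0_term_ext. intros i Hi. rewrite (Ez i Hi). field. lra.
  - apply has_sum_Z0_mul_r, Hz.
Qed.

Lemma same_bl_bl_of_inv k lam L x y x' y' : has_sum_Z0 lam L ->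
  sum_system k L x y -> sum_system k L x' y' ->
  same_bl (bl_of k lam y) (bl_of k lam x) (bl_of k lam y') (bl_of k lam x') -> x = x' /\ y = y'.
Proof.
  intros HL Hs Hs' [E E']. split; [eapply bl_of_eqZ0_inj; eassumption |].
  eapply bl_of_eqZ0_inj; [eassumption | apply sum_system_swap; eassumption.. | exact E'].
Qed.

Lemma transl_inv_bl_of_inv k lam L x y : has_sum_Z0 lam L -> sum_system k L x y ->
  transl_inv (bl_of k lam y) (bl_of k lam x) -> x = y.
Proof.
  intros HL Hs E. eapply bl_of_eqZ0_inj; [eassumption | eassumption | apply sum_system_swap; eassumption | exact E].
Qed.

Lemma periodic_bl_subcritical k lam L : (2 <= k)%nat -> (forall i, i <> 0%Z -> 0 < lam i) ->
  has_sum_Z0 lam L -> 0 < L <= Lambda_cr k ->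
  exists z0 zt0, periodic_bl k lam z0 zt0 /\ transl_inv z0 zt0 /\
    (forall z zt, periodic_bl k lam z zt -> same_bl z zt z0 zt0).
Proof.
  intros Hk Hlam HL [HL0 HLcr].
  destruct (sum_system_diag_exists k L HL0) as [x0 Hs0].
  exists (bl_of k lam x0), (bl_of k lam x0). split; [| split].
  - apply (periodic_bl_of_sum_system k lam L); [lia | assumption..].
  - intros i _. reflexivity.
  - intros z zt Hbl.
    destruct (sum_system_of_periodic_bl k lam L z zt Hlam HL Hbl) as (x & y & Hs & Hsame).
    assert (Exy := sum_system_subcritical k Hk L x y HLcr Hs). subst y.
    rewrite <- (sum_system_diag_unique k L x x0 Hs Hs0). exact Hsame.
Qed.

Lemma periodic_bl_supercritical k lam L : (2 <= k)%nat -> (forall i, i <> 0%Z -> 0 < lam i) ->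
  has_sum_Z0 lam L -> Lambda_cr k < L ->
  exists z0 zt0 z1 zt1 z2 zt2 : Z -> R,
    periodic_bl k lam z0 zt0 /\ periodic_bl k lam z1 zt1 /\ periodic_bl k lam z2 zt2 /\
    ~ same_bl z0 zt0 z1 zt1 /\ ~ same_bl z0 zt0 z2 zt2 /\ ~ same_bl z1 zt1 z2 zt2 /\
    transl_inv z0 zt0 /\ ~ transl_inv z1 zt1 /\ ~ transl_inv z2 zt2 /\
    (forall z zt, periodic_bl k lam z zt ->
       same_bl z zt z0 zt0 \/ same_bl z zt z1 zt1 \/ same_bl z zt z2 zt2).
Proof.
  intros Hk Hlam HL HLcr.
  assert (HL0 : 0 < L) by (generalize (Lambda_cr_pos k Hk); lra).
  destruct (sum_system_diag_exists k L HL0) as [x0 Hs0].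
  destruct (param_L_surj k Hk L HLcr) as (t & Ht & <-).
  assert (Hxy := sum_system_param k Hk t Ht). assert (Hyx := sum_system_swap _ _ _ _ Hxy).
  assert (Hlt := param_y_lt_x k Hk t Ht).
  set (X := param_x k t) in *. set (Y := param_y k t) in *.
  assert (Hbl : forall x y, sum_system k (param_L k t) x y ->
                  periodic_bl k lam (bl_of k lam y) (bl_of k lam x))
    by (intros; apply (periodic_bl_of_sum_system k lam (param_L k t)); [lia | assumption..]).
  exists (bl_of k lam x0), (bl_of k lam x0), (bl_of k lam Y), (bl_of k lam X),
    (bl_of k lam X), (bl_of k lam Y).
  split; [apply Hbl, Hs0 |]. split; [apply Hbl, Hxy |]. split; [apply Hbl, Hyx |].
  split; [intro E; destruct (same_bl_bl_of_inv _ _ _ _ _ _ _ HL Hs0 Hxy E); lra |].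
  split; [intro E; destruct (same_bl_bl_of_inv _ _ _ _ _ _ _ HL Hs0 Hyx E); lra |].
  split; [intro E; destruct (same_bl_bl_of_inv _ _ _ _ _ _ _ HL Hxy Hyx E); lra |].
  split; [intros i _; reflexivity |].
  split; [intro E; generalize (transl_inv_bl_of_inv _ _ _ _ _ HL Hxy E); lra |].
  split; [intro E; generalize (transl_inv_bl_of_inv _ _ _ _ _ HL Hyx E); lra |].
  intros z zt Hper.
  destruct (sum_system_of_periodic_bl k lam _ z zt Hlam HL Hper) as (x & y & Hs & Hsame).
  destruct (sum_system_supercritical k Hk t x y Ht Hs) as [-> | [[-> ->] | [-> ->]]].
  - left. rewrite <- (sum_system_diag_unique k _ y x0 Hs Hs0). exact Hsame.
  - right; left. exact Hsame.
  - right; right. exact Hsame.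
Qed.

Theorem mainTheorem2 (k : nat) (lam : Z -> R) :
  (2 <= k)%nat ->
  (forall j, j <> 0%Z -> 0 < lam j) ->
  (* (1) convergent case *)
  (forall Lam : R, has_sum_Z0 lam Lam ->
     (0 < Lam <= Lambda_cr k ->
        exists z0 zt0 : Z -> R,
          periodic_bl k lam z0 zt0 /\ transl_inv z0 zt0 /\
          (forall z zt, periodic_bl k lam z zt -> same_bl z zt z0 zt0)) /\
     (Lambda_cr k < Lam ->
        exists z0 zt0 z1 zt1 z2 zt2 : Z -> R,
          periodic_bl k lam z0 zt0 /\
          periodic_bl k lam z1 zt1 /\
          periodic_bl k lam z2 zt2 /\
          ~ same_bl z0 zt0 z1 zt1 /\ ~ same_bl z0 zt0 z2 zt2 /\
          ~ same_bl z1 zt1 z2 zt2 /\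
          transl_inv z0 zt0 /\ ~ transl_inv z1 zt1 /\ ~ transl_inv z2 zt2 /\
          (forall z zt, periodic_bl k lam z zt ->
             same_bl z zt z0 zt0 \/ same_bl z zt z1 zt1 \/ same_bl z zt z2 zt2))) /\
  (* (2) divergent case *)
  (~ summable_Z0 lam -> forall z zt : Z -> R, ~ periodic_bl k lam z zt).
Proof.
  intros Hk Hlam. split.
  - intros L HL. split.
    + apply periodic_bl_subcritical; assumption.
    + apply periodic_bl_supercritical; assumption.
  - intros Hdiv z zt Hper. exact (Hdiv (summable_of_periodic_bl k lam z zt Hper)).
Qed.
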